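(* Let $a>0$ and let $F$ be a smooth function on $\mathbb H^2(-a^2)$; set $f=F\circ Y^{-1}$ on the Euclidean unit disc $D_O(1)$. Then, provided the right-hand side is finite, $$\|\overline\nabla(\nabla F)\|_{L^2(\mathbb H^2(-a^2))}^2\le 10a^2\int_{D_O(1)}\Big\{|\nabla^{\mathbb R^2}f|^2+(1-|y|^2)^2|\nabla^{\mathbb R^2}\nabla^{\mathbb R^2}f|^2\Big\}\,dy_1\,dy_2,$$ where $|\nabla^{\mathbb R^2}\nabla^{\mathbb R^2}f|^2=\sum_{i,j=1}^2|\partial_{y_i}\partial_{y_j}f|^2$.
   Context: $\mathbb H^2(-a^2)$ is realized as the hyperboloid $\{(x_0,x_1,x_2)\in\mathbb R^3: x_0^2-x_1^2-x_2^2=1/a^2,\ x_0>0\}$ with the metric induced by $-dx_0^2+dx_1^2+dx_2^2$; it is the two-dimensional hyperbolic space of constant curvature $-a^2$. $Y:\mathbb H^2(-a^2)\to D_O(1)=\{y\in\mathbb R^2:|y|<1\}$ is the global coordinate chart $Y(x)=(x_1,x_2)/(x_0+1/a)$, in which the metric is $g=\frac{4}{a^2(1-|y|^2)^2}(dy_1^2+dy_2^2)$. $\nabla F$ is the Riemannian gradient vector field of $F$, $\overline\nabla$ the Levi-Civita connection, and $|\overline\nabla(\nabla F)|$ the pointwise norm of this $(1,1)$-tensor with respect to the induced metric; $L^2$ is with respect to the Riemannian volume. $\nabla^{\mathbb R^2}$ denotes the Euclidean gradient on $D_O(1)$. *)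

From HB Require Import structures.
From mathcomp Require Import all_boot all_order all_algebra.
From mathcomp Require Import all_classical all_reals all_analysis.
Set Implicit Arguments. Unset Strict Implicit. Unset Printing Implicit Defensive.
Import Order.TTheory GRing.Theory Num.Theory.
Import numFieldNormedType.Exports.
Local Open Scope classical_set_scope.
Local Open Scope ring_scope.

Section Hyp.
Variable R : realType.

Definition coord (i : 'I_2) (y : R * R) : R := if val i == 0%N then y.1 else y.2.

Definition sqnorm (y : R * R) : R := y.1 ^+ 2 + y.2 ^+ 2.

Definition disc : set (R * R) := [set y | sqnorm y < 1].

Definition pd (i : 'I_2) (f : R * R -> R) : R * R -> R :=
  fun y => if val i == 0%N then derive1 (fun t => f (t, y.2)) y.1
           else derive1 (fun t => f (y.1, t)) y.2.

Definition iter_pd (l : seq 'I_2) (f : R * R -> R) : R * R -> R :=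
  foldr pd f l.

Definition smooth_on (D : set (R * R)) (f : R * R -> R) : Prop :=
  forall l : seq 'I_2,
    (forall y, D y -> {for y, continuous (iter_pd l f)}) /\
    (forall y, D y ->
       derivable (fun t => iter_pd l f (t, y.2)) y.1 1 /\
       derivable (fun t => iter_pd l f (y.1, t)) y.2 1).

(* Y^{-1} : D_O(1) -> H^2(-a^2) subset R^3, inverse of
   Y(x) = (x1, x2) / (x0 + 1/a). *)
Definition Yinv (a : R) (y : R * R) : R * R * R :=
  ((1 + sqnorm y) / (a * (1 - sqnorm y)),
   2 * y.1 / (a * (1 - sqnorm y)),
   2 * y.2 / (a * (1 - sqnorm y))).

(* conformal factor of the hyperbolic metric in the chart Y:
   g = gconf a y (dy1^2 + dy2^2),  gconf a y = 4 / (a^2 (1-|y|^2)^2) *)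
Definition gconf (a : R) (y : R * R) : R := 4 / (a ^+ 2 * (1 - sqnorm y) ^+ 2).

Definition gmet (a : R) (i j : 'I_2) (y : R * R) : R :=
  if i == j then gconf a y else 0.
Definition ginv (a : R) (i j : 'I_2) (y : R * R) : R :=
  if i == j then (gconf a y)^-1 else 0.

Definition christoffel (a : R) (k i j : 'I_2) (y : R * R) : R :=
  2^-1 * \sum_(l < 2) ginv a k l y *
    (pd i (gmet a j l) y + pd j (gmet a i l) y - pd l (gmet a i j) y).

(* components of the covariant Hessian (nabla-bar nabla F)_{ij}
   (lowered indices) in the chart Y, where f = F o Y^{-1} *)
Definition hess (a : R) (f : R * R -> R) (i j : 'I_2) (y : R * R) : R :=
  pd i (pd j f) y - \sum_(k < 2) christoffel a k i j y * pd k f y.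

(* pointwise squared norm |nabla-bar (nabla F)|^2 with respect to g:
   g^{ik} g^{jl} H_ij H_kl (same for the (1,1)-tensor H^i_j = g^{ik} H_kj) *)
Definition hess_sqnorm (a : R) (f : R * R -> R) (y : R * R) : R :=
  \sum_(i < 2) \sum_(j < 2) \sum_(k < 2) \sum_(l < 2)
    ginv a i k y * ginv a j l y * hess a f i j y * hess a f k l y.

(* Riemannian volume density sqrt(det g) in the chart Y *)
Definition voldens (a : R) (y : R * R) : R := Num.sqrt (gconf a y ^+ 2).

Definition leb2 := ((@lebesgue_measure R) \x (@lebesgue_measure R))%E.

(* ||nabla-bar (nabla F)||^2_{L^2(H^2(-a^2))}, computed through the global
   chart Y (extended-real valued, possibly +oo) *)
Definition lhs_norm (a : R) (f : R * R -> R) : \bar R :=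
  (\int[leb2]_(y in disc) (hess_sqnorm a f y * voldens a y)%:E)%E.

Definition egrad_sq (f : R * R -> R) (y : R * R) : R :=
  \sum_(i < 2) (pd i f y) ^+ 2.
Definition ehess_sq (f : R * R -> R) (y : R * R) : R :=
  \sum_(i < 2) \sum_(j < 2) (pd i (pd j f) y) ^+ 2.

Definition rhs_int (f : R * R -> R) : \bar R :=
  (\int[leb2]_(y in disc)
     (egrad_sq f y + (1 - sqnorm y) ^+ 2 * ehess_sq f y)%:E)%E.

End Hyp.

From Pilot Require Import Defs.
From HB Require Import structures.
From mathcomp Require Import all_boot all_order all_algebra.
From mathcomp Require Import all_classical all_reals all_analysis.
From mathcomp Require Import ring lra.
Import Order.TTheory GRing.Theory Num.Theory.
Import numFieldNormedType.Exports.
Local Open Scope ring_scope.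

(* In the chart Y the metric is conformally flat, g = e^(2 phi) (dy1^2 + dy2^2)
   with d_i phi = q_i := 2 y_i / (1 - |y|^2).  Hence
   Gamma^k_ij = delta_jk q_i + delta_ik q_j - delta_ij q_k, and the covariant
   Hessian is the Euclidean one minus (q (x) df + df (x) q - <q, df> delta).  In
   dimension two this correction has squared norm 2 |q|^2 |df|^2, while
   |H|_g^2 dvol = g^-1 sum_ij H_ij^2 = a^2 (1 - |y|^2)^2 / 4 sum_ij H_ij^2.
   With (u - v)^2 <= 2 u^2 + 2 v^2 and |y| < 1 this gives, pointwise on the disc,
   |H|_g^2 dvol <= a^2 (1 - |y|^2)^2 |d^2 f|^2 / 2 + 4 a^2 |df|^2, which is then
   integrated. *)

Lemma sum_delta (R : pzSemiRingType) (I : finType) (i : I) (F : I -> R) :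
  \sum_k (i == k)%:R * F k = F i.
Proof.
rewrite (bigD1 i) //= eqxx mul1r big1 ?addr0 // => k.
by rewrite eq_sym => /negbTE ->; rewrite mul0r.
Qed.

Lemma sum_diag_quadratic (R : comPzRingType) (I : finType) (G : R) (H : I -> I -> R) :
  \sum_i \sum_j \sum_k \sum_l
    (if i == k then G else 0) * (if j == l then G else 0) * H i j * H k l =
  G ^+ 2 * \sum_i \sum_j H i j ^+ 2.
Proof.
rewrite mulr_sumr; apply: eq_bigr => i _; rewrite mulr_sumr; apply: eq_bigr => j _.
transitivity (\sum_k (i == k)%:R * \sum_l (j == l)%:R * (G ^+ 2 * H i j * H k l)).
  apply: eq_bigr => k _; rewrite mulr_sumr; apply: eq_bigr => l _.
  by case: eqP => _; case: eqP => _; rewrite ?(mul0r, mulr0, mul1r) // expr2; ring.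
by rewrite sum_delta (@sum_delta _ _ j) expr2 mulrA.
Qed.

Lemma sqr_subr_le (R : realDomainType) (x z : R) :
  (x - z) ^+ 2 <= 2 * x ^+ 2 + 2 * z ^+ 2.
Proof.
have -> : 2 * x ^+ 2 + 2 * z ^+ 2 = (x - z) ^+ 2 + (x + z) ^+ 2 by ring.
by rewrite lerDl; exact: sqr_ge0.
Qed.

Lemma sum_sqr_subr_le (R : realDomainType) (I : finType) (A T : I -> I -> R) :
  \sum_i \sum_j (A i j - T i j) ^+ 2 <=
  2 * \sum_i \sum_j A i j ^+ 2 + 2 * \sum_i \sum_j T i j ^+ 2.
Proof.
rewrite !mulr_sumr -big_split ler_sum // => i _.
by rewrite !mulr_sumr -big_split ler_sum // => j _; apply: sqr_subr_le.
Qed.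

Lemma sum_sqr_traceless_sym2 (R : comPzRingType) (q f : 'I_2 -> R) :
  \sum_i \sum_j (q i * f j + q j * f i - (i == j)%:R * \sum_k q k * f k) ^+ 2 =
  2 * (\sum_i q i ^+ 2) * (\sum_i f i ^+ 2).
Proof. rewrite !big_ord_recr !big_ord0 /=; ring. Qed.

Lemma derive1_conformal_factor (R : realType) (a b t : R) :
  a != 0 -> 1 - (t ^+ 2 + b) != 0 ->
  derive1 (fun s => 4 / (a ^+ 2 * (1 - (s ^+ 2 + b)) ^+ 2)) t =
  4 / (a ^+ 2 * (1 - (t ^+ 2 + b)) ^+ 2) * (4 * t / (1 - (t ^+ 2 + b))).
Proof.
move=> a0 c0.
pose Q : {poly R} := (4^-1 * a ^+ 2)%:P * (1 - ('X^2 + b%:P)) ^+ 2.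
have QE s : Q.[s] = 4^-1 * a ^+ 2 * (1 - (s ^+ 2 + b)) ^+ 2 by rewrite !hornerE.
have -> : (fun s => 4 / (a ^+ 2 * (1 - (s ^+ 2 + b)) ^+ 2)) = (fun s => Q.[s]^-1).
  by apply/funext => s; rewrite QE -mulrA [RHS]invfM invrK mulrC.
have Qt0 : Q.[t] != 0 by rewrite QE !mulf_neq0 ?invr_eq0 ?pnatr_eq0 ?expf_neq0.
have dQ : Q^`().[t] = 4^-1 * a ^+ 2 * (2 * (1 - (t ^+ 2 + b)) * - (2 * t)).
  rewrite /Q derivM derivC mul0r add0r expr2 derivM !derivB !derivD derivXn.
  by rewrite -polyC1 !derivC !hornerE /=; ring.
have dV := is_deriveV Qt0 (is_derive_poly Q t).
rewrite derive1E (@derive_val _ _ _ _ _ _ _ dV) dQ QE.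
by rewrite -[LHS]/(- _ ^- 2 * _); field; rewrite a0 c0.
Qed.

Section conformal_chart.
Variables (R : realType) (a : R) (y : R * R).
Hypotheses (a_gt0 : 0 < a) (y_disc : disc y).

Let c := 1 - sqnorm y.
Let q (i : 'I_2) := 2 * Defs.coord i y / c.

Let c_gt0 : 0 < c. Proof. by rewrite subr_gt0. Qed.

Lemma gconf_gt0 : 0 < gconf a y.
Proof. by rewrite divr_gt0 // mulr_gt0 // exprn_gt0. Qed.

Lemma pd_gconf i : pd i (gconf a) y = gconf a y * (2 * q i).
Proof.
have a0 : a != 0 by rewrite gt_eqF.
have c0 : c != 0 by rewrite gt_eqF.
have -> : 2 * q i = 4 * Defs.coord i y / c by rewrite /q; ring.
rewrite /pd /Defs.coord.
case: ifP => _.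
  by rewrite [LHS](@derive1_conformal_factor _ a (y.2 ^+ 2) y.1).
rewrite (_ : (fun t => gconf a (y.1, t)) =
             (fun t => 4 / (a ^+ 2 * (1 - (t ^+ 2 + y.1 ^+ 2)) ^+ 2))).
  by rewrite derive1_conformal_factor; rewrite ?[y.2 ^+ 2 + _]addrC.
by apply: funext => t; rewrite /gconf /sqnorm /= [_ + t ^+ 2]addrC.
Qed.

Lemma pd_gmet i j l :
  pd i (gmet a j l) y = (j == l)%:R * (gconf a y * (2 * q i)).
Proof.
rewrite /gmet; case: eqP => _; first by rewrite mul1r pd_gconf.
by rewrite mul0r /pd; case: ifP => _; exact: derive1_cst.
Qed.

Lemma christoffel_conformal k i j : christoffel a k i j y =
  (j == k)%:R * q i + (i == k)%:R * q j - (i == j)%:R * q k.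
Proof.
rewrite /christoffel (bigD1 k) //= big1 ?addr0 => [|l]; last first.
  by rewrite /ginv eq_sym => /negbTE ->; rewrite mul0r.
rewrite /ginv eqxx !pd_gmet.
by field; rewrite gt_eqF // gconf_gt0.
Qed.

Lemma hess_conformal f i j : hess a f i j y = pd i (pd j f) y -
  (q i * pd j f y + q j * pd i f y - (i == j)%:R * \sum_k q k * pd k f y).
Proof.
rewrite /hess; congr (_ - _).
transitivity (\sum_k ((j == k)%:R * (q i * pd k f y) +
  (i == k)%:R * (q j * pd k f y) - (i == j)%:R * (q k * pd k f y))).
  by apply: eq_bigr => k _; rewrite christoffel_conformal; ring.
by rewrite sumrB big_split /= !sum_delta -mulr_sumr.
Qed.

Lemma hess_density f : hess_sqnorm a f y * voldens a y =
  (gconf a y)^-1 * \sum_i \sum_j hess a f i j y ^+ 2.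
Proof.
have g0 := gconf_gt0.
rewrite /hess_sqnorm /ginv sum_diag_quadratic /voldens sqrtr_sqr ger0_norm ?ltW //.
by field; rewrite gt_eqF.
Qed.

Lemma hess_density_ge0 f : 0 <= hess_sqnorm a f y * voldens a y.
Proof.
rewrite hess_density; apply: mulr_ge0; first by rewrite invr_ge0 ltW ?gconf_gt0.
by apply: sumr_ge0 => i _; apply: sumr_ge0 => j _; exact: sqr_ge0.
Qed.

Lemma hess_density_le f : hess_sqnorm a f y * voldens a y <=
  10 * a ^+ 2 * (egrad_sq f y + c ^+ 2 * ehess_sq f y).
Proof.
have c0 : c != 0 by rewrite gt_eqF.
set E := ehess_sq f y; set G := egrad_sq f y.
have E0 : 0 <= E.
  by apply: sumr_ge0 => i _; apply: sumr_ge0 => j _; exact: sqr_ge0.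
have G0 : 0 <= G by apply: sumr_ge0 => i _; exact: sqr_ge0.
have qE : \sum_i q i ^+ 2 = 4 * sqnorm y / c ^+ 2.
  by rewrite !big_ord_recr big_ord0 /= /q /Defs.coord /sqnorm /=; field.
have hessE : \sum_i \sum_j hess a f i j y ^+ 2 <=
             2 * E + 2 * (2 * (4 * sqnorm y / c ^+ 2) * G).
  under eq_bigr do under eq_bigr do rewrite hess_conformal.
  by rewrite -qE -sum_sqr_traceless_sym2; exact: sum_sqr_subr_le.
rewrite hess_density (_ : (gconf a y)^-1 = a ^+ 2 * c ^+ 2 / 4); last first.
  by rewrite /gconf invf_div.
apply: le_trans (ler_wpM2l _ hessE) _.
  by rewrite divr_ge0 // mulr_ge0 // sqr_ge0.
have -> : a ^+ 2 * c ^+ 2 / 4 * (2 * E + 2 * (2 * (4 * sqnorm y / c ^+ 2) * G)) =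
          a ^+ 2 * (c ^+ 2 * E / 2 + 4 * (sqnorm y * G)) by field.
rewrite [10 * _]mulrC -[X in _ <= X]mulrA ler_pM2l ?exprn_gt0 //.
have yG : sqnorm y * G <= G by rewrite ler_piMl // ?ltW // addr_ge0 ?sqr_ge0.
have cE : 0 <= c ^+ 2 * E by rewrite mulr_ge0 ?sqr_ge0.
lra.
Qed.

End conformal_chart.

Section scaled_integral.
Local Open Scope ereal_scope.
Import HBNNSimple.

(* No measurability is needed: for nonnegative integrands the integral is the
   supremum of the integrals of the simple functions below it. *)
Lemma ge0_le_scaled_integral (d : measure_display) (T : measurableType d)
    (R : realType) (mu : {measure set T -> \bar R}) (D : set T)
    (f g : T -> R) (k : R) : (0 < k)%R ->
  (forall x, D x -> 0 <= f x)%R -> (forall x, D x -> f x <= k * g x)%R ->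
  \int[mu]_(x in D) (f x)%:E <= k%:E * \int[mu]_(x in D) (g x)%:E.
Proof.
move=> k0 f0 fg.
have g0 x : D x -> (0 <= g x)%R.
  by move=> Dx; have := le_trans (f0 x Dx) (fg x Dx); rewrite pmulr_rge0.
rewrite integral_mkcond [X in _ <= _ * X]integral_mkcond.
rewrite !ge0_integralTE; last 2 first.
- by move=> x; rewrite /patch; case: ifPn => // /set_mem Dx; rewrite lee_fin g0.
- by move=> x; rewrite /patch; case: ifPn => // /set_mem Dx; rewrite lee_fin f0.
apply: ge_ereal_sup => _ [h /= hf <-].
have k0' : (0 <= k^-1)%R by rewrite invr_ge0 ltW.
have -> : sintegral mu h = k%:E * sintegral mu (scale_nnsfun h k0').
  by rewrite sintegralrM muleA -EFinM mulfV ?gt_eqF // mul1e.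
rewrite lee_pmul2l ?lte_fin //.
apply: ereal_sup_ubound; exists (scale_nnsfun h k0') => //= x.
have := hf x; rewrite /patch; case: ifPn => [/set_mem Dx|_]; rewrite !lee_fin.
  by move=> hx; rewrite ler_pdivrMl // (le_trans hx) // fg.
by move=> hx; rewrite mulr_ge0_le0 // ltW.
Qed.

End scaled_integral.

Theorem lemma3p1 (R : realType) (a : R) (F : R * R * R -> R) :
  0 < a ->
  smooth_on (@disc R) (F \o Yinv a) ->
  (rhs_int (F \o Yinv a) < +oo)%E ->
  (lhs_norm a (F \o Yinv a) <= (10 * a ^+ 2)%:E * rhs_int (F \o Yinv a))%E.
Proof.
move=> a_gt0 _ _.
apply: ge0_le_scaled_integral.
- by rewrite mulr_gt0 // exprn_gt0.
- by move=> y Dy; exact: hess_density_ge0.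
- by move=> y Dy; exact: hess_density_le.
Qed.
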